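(* Every $\mathrm{PL}_{\{\neg,\top\}}$-formula $\phi$ is uniquely characterized with respect to $\mathrm{PL}_{\{\neg,\top\}}$ by a set of 2 labeled examples.
   Context: $\top$ is treated as a constant unary Boolean function and $\neg$ is negation. Fix a countably infinite set of propositional variables. $\mathrm{PL}_{\{\neg,\top\}}$ is the set of formulas generated by $\phi::=x\mid\neg\phi\mid\top(\phi)$, with the obvious semantics under truth assignments $V$ (assigning $0$ or $1$ to every variable); two formulas are equivalent if they agree under all assignments. A labeled example is a pair $(V,\mathrm{lab})$ with $V$ a truth assignment and $\mathrm{lab}\in\{0,1\}$; $\phi$ fits it if $\phi$ evaluates to $\mathrm{lab}$ under $V$. A set $E$ of labeled examples uniquely characterizes $\phi$ with respect to a set of formulas $L$ if $\phi$ fits all of $E$ and every formula in $L$ that fits all of $E$ is equivalent to $\phi$. *)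

From Stdlib Require Import List Bool.
Import ListNotations.

Inductive form : Type :=
| Var : nat -> form
| Neg : form -> form
| Top : form -> form.

Definition assignment := nat -> bool.

Fixpoint eval (V : assignment) (phi : form) : bool :=
  match phi with
  | Var x => V x
  | Neg psi => negb (eval V psi)
  | Top _ => true
  end.

Definition equiv (phi psi : form) : Prop := forall V, eval V phi = eval V psi.

(* A labeled example: an assignment and a label in {0,1} (false = 0, true = 1). *)
Definition example := (assignment * bool)%type.

Definition fits (phi : form) (e : example) : Prop := eval (fst e) phi = snd e.

Definition fits_all (phi : form) (E : list example) : Prop :=
  forall e, In e E -> fits phi e.

Definition uniquely_characterizes (E : list example) (phi : form) : Prop :=
  fits_all phi E /\ forall psi, fits_all psi E -> equiv psi phi.

(** Since [Top] ignores its argument and [Neg] only flips polarity, every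
    formula is equivalent to a literal [x] or [~x], or to a constant.  Two
    examples single out each of these normal forms: the literal of polarity
    [p] on [x] is the only one that is true on the assignment giving [x] the
    value [p] and every other variable the value [negb p], and false on the
    constant assignment [negb p]; the constant [b] is the only one taking the
    value [b] both on the all-false and on the all-true assignment. *)

From Stdlib Require Import List Bool Arith.
Import ListNotations.

Inductive normal_form : Type :=
| Lit (x : nat) (pol : bool)
| Const (b : bool).

Definition nf_eval (V : assignment) (n : normal_form) : bool :=
  match n with
  | Lit x pol => Bool.eqb (V x) pol
  | Const b => b
  end.

Definition nf_neg (n : normal_form) : normal_form :=
  match n with
  | Lit x pol => Lit x (negb pol)
  | Const b => Const (negb b)
  end.

Fixpoint to_nf (phi : form) : normal_form :=
  match phi with
  | Var x => Lit x true
  | Neg psi => nf_neg (to_nf psi)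
  | Top _ => Const true
  end.

Lemma nf_eval_neg V n : nf_eval V (nf_neg n) = negb (nf_eval V n).
Proof. destruct n as [x pol | b]; simpl; [destruct (V x), pol |]; reflexivity. Qed.

Lemma eval_to_nf V phi : eval V phi = nf_eval V (to_nf phi).
Proof.
  induction phi as [x | psi IH | psi _]; simpl.
  - now destruct (V x).
  - now rewrite nf_eval_neg, IH.
  - reflexivity.
Qed.

Definition nf_examples (n : normal_form) : list example :=
  match n with
  | Lit x pol =>
      [(fun k => Bool.eqb (k =? x) pol, true); (fun _ => negb pol, false)]
  | Const b => [(fun _ => false, b); (fun _ => true, b)]
  end.

Lemma nf_examples_length n : length (nf_examples n) = 2.
Proof. now destruct n. Qed.

Lemma nf_examples_NoDup n : NoDup (nf_examples n).
Proof.
  destruct n as [x pol | b];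
    (constructor; [intros [Heq | []] | constructor; [intros [] | constructor]]).
  - discriminate Heq.
  - injection Heq as Hfalse_true.
    discriminate (f_equal (fun V => V 0) Hfalse_true).
Qed.

Lemma nf_examples_fit n e : In e (nf_examples n) -> nf_eval (fst e) n = snd e.
Proof.
  destruct n as [x pol | b]; intros [<- | [<- | []]]; simpl.
  - rewrite Nat.eqb_refl. now destruct pol.
  - now destruct pol.
  - reflexivity.
  - reflexivity.
Qed.

Lemma nf_examples_determine m n :
  (forall e, In e (nf_examples n) -> nf_eval (fst e) m = snd e) -> m = n.
Proof.
  intros Hfit.
  destruct n as [x pol | b];
    pose proof (Hfit _ (or_introl eq_refl)) as H1;
    pose proof (Hfit _ (or_intror (or_introl eq_refl))) as H2;
    destruct m as [y pol' | c]; simpl in H1, H2.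
  - destruct (Nat.eq_dec y x) as [-> | Hyx].
    + rewrite Nat.eqb_refl in H1. now destruct pol, pol'.
    + apply Nat.eqb_neq in Hyx. rewrite Hyx in H1.
      destruct pol, pol'; discriminate.
  - now destruct pol, c.
  - destruct pol'; destruct b; discriminate.
  - now subst.
Qed.

Lemma nf_examples_characterize phi :
  uniquely_characterizes (nf_examples (to_nf phi)) phi.
Proof.
  split.
  - intros e He. unfold fits. rewrite eval_to_nf. now apply nf_examples_fit.
  - intros psi Hpsi V.
    rewrite !eval_to_nf, (nf_examples_determine (to_nf psi) (to_nf phi)).
    + reflexivity.
    + intros e He. rewrite <- eval_to_nf. exact (Hpsi e He).
Qed.

Theorem theoremA2 :
  forall phi : form,
    exists E : list example,
      length E = 2 /\ NoDup E /\ uniquely_characterizes E phi.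
Proof.
  intro phi.
  exists (nf_examples (to_nf phi)).
  split; [|split].
  - apply nf_examples_length.
  - apply nf_examples_NoDup.
  - apply nf_examples_characterize.
Qed.
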